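(* Let $n\geq 8$ and let $x,y\in V(K_n)$ be distinct. Then in the Waiter-Client game on $K_n$, within $n$ rounds Waiter can force Client to build a red Hamilton path between $x$ and $y$.
   Context: Waiter-Client game on $K_n$: in each round Waiter offers two free edges of $K_n$, Client colors one of them red and the other becomes blue. *)

From mathcomp Require Import all_boot.
Set Implicit Arguments. Unset Strict Implicit. Unset Printing Implicit Defensive.

Definition is_edge (n : nat) (e : {set 'I_n}) : bool := #|e| == 2.

Definition free_edge (n : nat) (R B : {set {set 'I_n}}) (e : {set 'I_n}) : bool :=
  [&& is_edge e, e \notin R & e \notin B].

Definition red_ham_path (n : nat) (R : {set {set 'I_n}}) (x y : 'I_n) : Prop :=
  exists p : seq 'I_n,
    [/\ uniq (x :: p), size (x :: p) = n, last x p = y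
      & path (fun a b => [set a; b] \in R) x p].

(* In each round Waiter offers two distinct free edges e1, e2; Client colours
   one of them red and the other becomes blue. *)
Fixpoint waiter_wins (n : nat) (x y : 'I_n) (k : nat)
    (R B : {set {set 'I_n}}) : Prop :=
  red_ham_path R x y \/
  match k with
  | 0 => False
  | k'.+1 => exists e1 e2 : {set 'I_n},
      [/\ e1 != e2, free_edge R B e1, free_edge R B e2,
          waiter_wins x y k' (e1 |: R) (e2 |: B)
        & waiter_wins x y k' (e2 |: R) (e1 |: B)]
  end.

From mathcomp Require Import all_boot zify.
Set Implicit Arguments. Unset Strict Implicit. Unset Printing Implicit Defensive.

(* Waiter grows a red path greedily from x.  If v is its current end and a, b
   are two vertices other than y that are not yet on it, Waiter offers va and
   vb: whichever Client colours red extends the path by one vertex.  Every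
   offered edge contains the end of the path at that moment, and that vertex
   then leaves the window formed by the end of the path, the unused vertices
   and y; so no edge inside the window is ever claimed.  After n - 8 rounds the
   window is an untouched K_8 in which a red Hamilton path from its first to its
   last vertex has to be forced in the remaining 8 rounds; this base case is an
   explicit strategy tree whose correctness is checked by computation. *)

Lemma eq_set2 (T : finType) (u v w z : T) : u != v ->
  ([set u; v] == [set w; z]) = ((u == w) && (v == z)) || ((u == z) && (v == w)).
Proof.
move=> uv; apply/eqP/idP => [E | /orP[] /andP[/eqP -> /eqP ->] //]; last first.
  by rewrite setUC.
have : u \in [set w; z] by rewrite -E set21.
have : v \in [set w; z] by rewrite -E set22.
have : w \in [set u; v] by rewrite E set21.
have : z \in [set u; v] by rewrite E set22.
rewrite !inE => _ _ /orP[] /eqP hv /orP[] /eqP hu; subst; rewrite ?eqxx ?orbT //.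
all: by rewrite eqxx in uv.
Qed.

Definition red_adj n (R : {set {set 'I_n}}) (a b : 'I_n) : bool := [set a; b] \in R.

Lemma red_adj_setU1 n (R : {set {set 'I_n}}) e x q :
  path (red_adj R) x q -> path (red_adj (e |: R)) x q.
Proof. by apply: sub_path => a b; rewrite /red_adj in_setU1 => ->; rewrite orbT. Qed.

Definition same_pair (e e' : nat * nat) : bool :=
  ((e.1 == e'.1) && (e.2 == e'.2)) || ((e.1 == e'.2) && (e.2 == e'.1)).

Definition mem_pair (e : nat * nat) (L : seq (nat * nat)) : bool := has (same_pair e) L.

(* [Offer a b c d t1 t2]: Waiter offers ab and cd, and play goes on with t1 if
   Client colours ab red, with t2 if cd.  [Leaf p]: the red path is 0 :: p. *)
Inductive strategy :=
  | Leaf of seq nat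
  | Offer of nat & nat & nat & nat & strategy & strategy.

Section StrategyCheck.

(* The board is K_(m+2) on 0, ..., m+1; the path must run from 0 to m+1. *)
Variable m : nat.

Definition pair_adj (R : seq (nat * nat)) (a b : nat) : bool :=
  [&& a < m.+2, b < m.+2, a != b & mem_pair (a, b) R].

Definition free_pair (R B : seq (nat * nat)) (a b : nat) : bool :=
  [&& a < m.+2, b < m.+2, a != b & ~~ mem_pair (a, b) (R ++ B)].

Definition is_ham_leaf (R : seq (nat * nat)) (p : seq nat) : bool :=
  [&& perm_eq p (iota 1 m.+1), last 0 p == m.+1 & path (pair_adj R) 0 p].

Fixpoint strategy_wins (k : nat) (R B : seq (nat * nat)) (t : strategy) : bool :=
  match t with
  | Leaf p => is_ham_leaf R p
  | Offer a b c d t1 t2 =>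
    if k is k'.+1 then
      [&& free_pair R B a b, free_pair R B c d, ~~ same_pair (a, b) (c, d),
          strategy_wins k' ((a, b) :: R) ((c, d) :: B) t1 &
          strategy_wins k' ((c, d) :: R) ((a, b) :: B) t2]
    else false
  end.

End StrategyCheck.

Section Transfer.

Variables (n m : nat) (f : nat -> 'I_n).
Hypothesis f_inj : {in [pred i | i < m.+2] &, injective f}.

Lemma f_neq a b : a < m.+2 -> b < m.+2 -> a != b -> f a != f b.
Proof. by move=> ha hb; apply: contra => /eqP /(f_inj ha hb) ->. Qed.

Lemma eq_set2_pair a b c d : a < m.+2 -> b < m.+2 -> c < m.+2 -> d < m.+2 ->
  a != b -> ([set f a; f b] == [set f c; f d]) = same_pair (a, b) (c, d).
Proof.
move=> ha hb hc hd ab; rewrite eq_set2 ?f_neq //.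
have eq_f i j : i < m.+2 -> j < m.+2 -> (f i == f j) = (i == j).
  by move=> hi hj; apply/eqP/eqP => [/(f_inj hi hj) | ->].
by rewrite !eq_f.
Qed.

Definition encodes (L : seq (nat * nat)) (S : {set {set 'I_n}}) :=
  forall a b, a < m.+2 -> b < m.+2 -> a != b ->
  ([set f a; f b] \in S) = mem_pair (a, b) L.

Lemma encodes_cons L S a b : a < m.+2 -> b < m.+2 -> a != b -> encodes L S ->
  encodes ((a, b) :: L) ([set f a; f b] |: S).
Proof.
move=> ha hb ab LS a' b' ha' hb' ab'.
by rewrite in_setU1 LS // eq_set2_pair.
Qed.

Lemma free_edge_encoded Rl Bl R B a b : encodes Rl R -> encodes Bl B ->
  free_pair m Rl Bl a b -> free_edge R B [set f a; f b].
Proof.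
move=> RlR BlB /and4P[ha hb ab]; rewrite /mem_pair has_cat negb_or => /andP[nR nB].
by rewrite /free_edge /is_edge cards2 f_neq //= RlR // BlB // nR nB.
Qed.

Lemma red_ham_path_leaf Rl R x q p : encodes Rl R -> is_ham_leaf m Rl p ->
  path (red_adj R) x q -> last x q = f 0 ->
  perm_eq (x :: q ++ map f (iota 1 m.+1)) (enum 'I_n) ->
  red_ham_path R x (f m.+1).
Proof.
move=> RlR /and3P[perm_p /eqP last_p path_p] path_q last_q pe.
have pe' : perm_eq (x :: q ++ map f p) (enum 'I_n).
  by apply: perm_trans pe; rewrite perm_cons perm_cat2l perm_map.
exists (q ++ map f p); split.
- by rewrite (perm_uniq pe') enum_uniq.
- by rewrite (perm_size pe') size_enum_ord.
- by rewrite last_cat last_q last_map last_p.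
- rewrite cat_path path_q last_q path_map /=; apply: sub_path path_p.
  by move=> a b /and4P[ha hb ab Rab] /=; rewrite RlR.
Qed.

Lemma strategy_wins_transfer x q : last x q = f 0 ->
  perm_eq (x :: q ++ map f (iota 1 m.+1)) (enum 'I_n) ->
  forall t k Rl Bl R B, strategy_wins m k Rl Bl t -> encodes Rl R -> encodes Bl B ->
  path (red_adj R) x q -> waiter_wins x (f m.+1) k R B.
Proof.
move=> last_q pe; elim=> [p | a b c d t1 IH1 t2 IH2] k Rl Bl R B.
  by case: k => [|k] leaf RlR _ path_q; left; apply: red_ham_path_leaf RlR leaf path_q last_q pe.
case: k => [|k] //= /and5P[fab fcd nsame win1 win2] RlR BlB path_q.
have /and4P[ha hb ab _] := fab; have /and4P[hc hd cd _] := fcd.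
right; exists [set f a; f b], [set f c; f d]; split.
- by rewrite eq_set2_pair.
- exact: free_edge_encoded fab.
- exact: free_edge_encoded fcd.
- by apply: IH1 win1 _ _ (red_adj_setU1 _ path_q); apply: encodes_cons.
- by apply: IH2 win2 _ _ (red_adj_setU1 _ path_q); apply: encodes_cons.
Qed.

End Transfer.

Section Greedy.

Variables (n : nat) (x y : 'I_n).

Definition greedy_position (R B : {set {set 'I_n}}) (q s : seq 'I_n) : Prop :=
  [/\ perm_eq (x :: q ++ s ++ [:: y]) (enum 'I_n), path (red_adj R) x q
    & {in last x q :: s ++ [:: y] &, forall a b, a != b ->
         ([set a; b] \notin R) && ([set a; b] \notin B)}].

Lemma greedy_position_uniq R B q s :
  greedy_position R B q s -> uniq (last x q :: s ++ [:: y]).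
Proof.
case=> pe _ _; move: (perm_uniq pe); rewrite enum_uniq -cat1s catA cat_uniq.
case/and3P=> _ /hasPn disj uniq_s; rewrite /= uniq_s andbT.
by apply/negP => /disj; rewrite /= mem_last.
Qed.

Lemma greedy_position_swap R B q a b s :
  greedy_position R B q (a :: b :: s) -> greedy_position R B q (b :: a :: s).
Proof.
have swap t : perm_eq (b :: a :: t) (a :: b :: t).
  by apply/permP => r /=; rewrite addnCA.
case=> pe path_q free; split=> //.
  by apply: perm_trans pe; rewrite perm_cons perm_cat2l swap.
by apply: sub_in2 free => c; rewrite in_cons (perm_mem (swap _)) -in_cons.
Qed.

Lemma free_edge_offered R B q a s :
  greedy_position R B q (a :: s) -> free_edge R B [set last x q; a].
Proof.
move=> pos; have /= /andP[vNa _] := greedy_position_uniq pos.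
have [_ _ free] := pos; rewrite /free_edge /is_edge cards2.
have va : last x q != a by apply: contraNneq vNa => ->; exact: mem_head.
by rewrite va /=; apply: free; rewrite ?inE ?eqxx ?orbT.
Qed.

Lemma greedy_position_step R B q a b s :
  greedy_position R B q (a :: b :: s) ->
  greedy_position ([set last x q; a] |: R) ([set last x q; b] |: B)
    (rcons q a) (b :: s).
Proof.
move=> pos; have /= /andP[vN _] := greedy_position_uniq pos.
have [pe path_q free] := pos; split.
- by rewrite cat_rcons.
- by rewrite rcons_path red_adj_setU1 //= /red_adj setU11.
rewrite last_rcons => c d hc hd cd.
have [cv dv] : c != last x q /\ d != last x q.
  by split; apply: contraNneq vN => <-.
have nv e : [set c; d] != [set last x q; e].
  by rewrite eq_set2 // (negbTE cv) (negbTE dv) andbF.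
by rewrite !in_setU1 !negb_or !nv /=; apply: free; rewrite // inE ?hc ?hd orbT.
Qed.

Lemma greedy_position_endgame m k t : strategy_wins m k [::] [::] t ->
  forall R B q s, greedy_position R B q s -> size s = m -> waiter_wins x y k R B.
Proof.
move=> win R B q s pos size_s; have uniq_l := greedy_position_uniq pos.
have [pe path_q free] := pos.
set l := last x q :: s ++ [:: y] in uniq_l free.
have size_l : size l = m.+2 by rewrite /= size_cat size_s addn1.
pose f i := nth x l i.
have f_inj : {in [pred i | i < m.+2] &, injective f}.
  by move=> i j hi hj /eqP; rewrite nth_uniq ?size_l // => /eqP.
have f_y : f m.+1 = y by rewrite /f /= nth_cat size_s ltnn subnn.
have f_inner : map f (iota 1 m.+1) = s ++ [:: y].
  rewrite map_nth_iota ?size_l //= drop0 take_oversize //.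
  by rewrite size_cat size_s addn1.
have window_free a b : a < m.+2 -> b < m.+2 -> a != b ->
    ([set f a; f b] \notin R) && ([set f a; f b] \notin B).
  by move=> ha hb ab; apply: free; rewrite ?mem_nth ?size_l // (f_neq f_inj).
have := strategy_wins_transfer f_inj (erefl : last x q = f 0) _ win.
rewrite f_y f_inner; apply=> //.
- by move=> a b ha hb ab; have /andP[/negbTE -> _] := window_free a b ha hb ab.
- by move=> a b ha hb ab; have /andP[_ /negbTE ->] := window_free a b ha hb ab.
Qed.

Lemma initial_greedy_position : x != y ->
  exists2 s, greedy_position set0 set0 [::] s & size s = n - 2.
Proof.
move=> xy; set s := [seq z <- enum 'I_n | (z != x) && (z != y)].
have pe : perm_eq (x :: [::] ++ s ++ [:: y]) (enum 'I_n).
  apply: uniq_perm; rewrite ?enum_uniq //.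
  - rewrite /= cat_uniq /= andbT filter_uniq ?enum_uniq // !mem_cat !inE negb_or xy /=.
    by rewrite /s !mem_filter eqxx /= ?andbF ?orbF /= eqxx andbF.
  - move=> z; rewrite mem_enum /= inE mem_cat mem_filter mem_enum inE andbT.
    by rewrite inE; case: (z =P x) => //= _; case: (z =P y).
exists s; first by split=> // a b _ _ _; rewrite !in_set0.
by have := perm_size pe; rewrite size_enum_ord /= size_cat /= addn1; lia.
Qed.

Variables (m k : nat).
Hypothesis m_gt0 : 0 < m.
Hypothesis endgame : forall R B q s,
  greedy_position R B q s -> size s = m -> waiter_wins x y k R B.

Lemma greedy_wins j R B q s :
  greedy_position R B q s -> size s = j + m -> waiter_wins x y (j + k) R B.
Proof.
elim: j R B q s => [|j IH] R B q s pos size_s; first exact: endgame pos size_s.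
case: s pos size_s => [|a [|b s]] pos size_s; try by move: size_s m_gt0 => /=; lia.
have /= /and3P[vN aN _] := greedy_position_uniq pos.
have [va vb ab] : [/\ last x q != a, last x q != b & a != b].
  by split; [apply: contraNneq vN => -> | apply: contraNneq vN => ->
            | apply: contraNneq aN => ->]; rewrite !inE eqxx ?orbT.
right; exists [set last x q; a], [set last x q; b]; split.
- by rewrite eq_set2 //= eqxx (negbTE ab) (negbTE vb).
- exact: free_edge_offered pos.
- exact: free_edge_offered (greedy_position_swap pos).
- by apply: IH (greedy_position_step pos) _; move: size_s => /= [].
- by apply: IH (greedy_position_step (greedy_position_swap pos)) _; move: size_s => /= [].
Qed.

End Greedy.

Definition K8_strategy : strategy :=
(Offer 2 6 3 6
(Offer 4 6 5 6
(Offer 1 4 4 5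
(Offer 1 5 2 5
(Offer 2 3 3 5
(Offer 0 5 5 7
(Offer 1 3 3 4
(Offer 3 7 4 7
(Leaf [::5;1;4;6;2;3;7])
(Leaf [::5;1;3;2;6;4;7]))
(Offer 3 7 6 7
(Leaf [::5;1;4;6;2;3;7])
(Leaf [::5;1;4;3;2;6;7])))
(Offer 0 4 0 6
(Offer 0 3 1 3
(Leaf [::3;2;6;4;1;5;7])
(Leaf [::4;6;2;3;1;5;7]))
(Offer 0 3 3 4
(Leaf [::3;2;6;4;1;5;7])
(Leaf [::6;2;3;4;1;5;7]))))
(Offer 0 2 0 3
(Offer 1 3 1 7
(Offer 3 7 5 7
(Leaf [::2;6;4;1;5;3;7])
(Leaf [::2;6;4;1;3;5;7]))
(Offer 3 4 3 7
(Leaf [::2;6;4;3;5;1;7])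
(Leaf [::2;6;4;1;5;3;7])))
(Offer 1 2 2 4
(Offer 2 7 4 7
(Leaf [::3;5;1;4;6;2;7])
(Leaf [::3;5;1;2;6;4;7]))
(Offer 2 7 6 7
(Leaf [::3;5;1;4;6;2;7])
(Leaf [::3;5;1;4;2;6;7])))))
(Offer 1 3 3 5
(Offer 0 5 5 7
(Offer 1 7 2 3
(Offer 3 4 3 7
(Leaf [::5;2;6;4;3;1;7])
(Leaf [::5;2;6;4;1;3;7]))
(Offer 3 7 6 7
(Leaf [::5;2;6;4;1;3;7])
(Leaf [::5;2;3;1;4;6;7])))
(Offer 0 1 0 6
(Offer 0 3 3 4
(Leaf [::3;1;4;6;2;5;7])
(Leaf [::1;3;4;6;2;5;7]))
(Offer 0 3 2 3
(Leaf [::3;1;4;6;2;5;7])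
(Leaf [::6;4;1;3;2;5;7]))))
(Offer 0 1 0 3
(Offer 2 3 3 4
(Offer 3 7 5 7
(Leaf [::1;4;6;2;5;3;7])
(Leaf [::1;4;6;2;3;5;7]))
(Offer 3 7 6 7
(Leaf [::1;4;6;2;5;3;7])
(Leaf [::1;4;3;5;2;6;7])))
(Offer 1 2 1 6
(Offer 1 7 6 7
(Leaf [::3;5;2;6;4;1;7])
(Leaf [::3;5;2;1;4;6;7]))
(Offer 1 7 4 7
(Leaf [::3;5;2;6;4;1;7])
(Leaf [::3;5;2;6;1;4;7]))))))
(Offer 1 2 1 5
(Offer 1 3 3 5
(Offer 0 5 5 7
(Offer 1 7 3 4
(Offer 2 3 3 7
(Leaf [::5;4;6;2;3;1;7])
(Leaf [::5;4;6;2;1;3;7]))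
(Offer 3 7 6 7
(Leaf [::5;4;6;2;1;3;7])
(Leaf [::5;4;3;1;2;6;7])))
(Offer 0 1 0 6
(Offer 0 3 2 3
(Leaf [::3;1;2;6;4;5;7])
(Leaf [::1;3;2;6;4;5;7]))
(Offer 0 3 3 4
(Leaf [::3;1;2;6;4;5;7])
(Leaf [::6;2;1;3;4;5;7]))))
(Offer 0 1 1 7
(Offer 2 3 3 4
(Offer 3 7 6 7
(Leaf [::1;2;6;4;5;3;7])
(Leaf [::1;2;3;5;4;6;7]))
(Offer 3 7 5 7
(Leaf [::1;2;6;4;5;3;7])
(Leaf [::1;2;6;4;3;5;7])))
(Offer 0 5 0 6
(Offer 0 3 3 4
(Leaf [::3;5;4;6;2;1;7])
(Leaf [::5;3;4;6;2;1;7]))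
(Offer 0 3 2 3
(Leaf [::3;5;4;6;2;1;7])
(Leaf [::6;4;5;3;2;1;7])))))
(Offer 1 3 2 3
(Offer 0 2 0 3
(Offer 1 7 3 4
(Offer 3 5 3 7
(Leaf [::2;6;4;5;3;1;7])
(Leaf [::2;6;4;5;1;3;7]))
(Offer 3 7 5 7
(Leaf [::2;6;4;5;1;3;7])
(Leaf [::2;6;4;3;1;5;7])))
(Offer 2 4 2 5
(Offer 2 7 6 7
(Leaf [::3;1;5;4;6;2;7])
(Leaf [::3;1;5;4;2;6;7]))
(Offer 2 7 4 7
(Leaf [::3;1;5;4;6;2;7])
(Leaf [::3;1;5;2;6;4;7]))))
(Offer 0 1 1 7
(Offer 3 4 3 5
(Offer 3 7 6 7
(Leaf [::1;5;4;6;2;3;7])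
(Leaf [::1;5;4;3;2;6;7]))
(Offer 3 7 4 7
(Leaf [::1;5;4;6;2;3;7])
(Leaf [::1;5;3;2;6;4;7])))
(Offer 0 4 0 6
(Offer 0 3 3 5
(Leaf [::3;2;6;4;5;1;7])
(Leaf [::4;6;2;3;5;1;7]))
(Offer 0 3 3 4
(Leaf [::3;2;6;4;5;1;7])
(Leaf [::6;2;3;4;5;1;7])))))))
(Offer 2 3 2 4
(Offer 1 3 1 5
(Offer 1 4 4 5
(Offer 0 4 4 7
(Offer 2 5 2 7
(Offer 5 7 6 7
(Leaf [::4;1;3;2;6;5;7])
(Leaf [::4;1;3;2;5;6;7]))
(Offer 3 5 5 7
(Leaf [::4;1;3;5;6;2;7])
(Leaf [::4;1;3;2;6;5;7])))
(Offer 0 2 0 6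
(Offer 0 5 3 5
(Leaf [::5;6;2;3;1;4;7])
(Leaf [::2;6;5;3;1;4;7]))
(Offer 0 5 2 5
(Leaf [::5;6;2;3;1;4;7])
(Leaf [::6;5;2;3;1;4;7]))))
(Offer 0 2 1 2
(Offer 1 7 4 7
(Offer 0 4 3 4
(Leaf [::4;5;6;2;3;1;7])
(Leaf [::2;6;5;4;3;1;7]))
(Offer 0 1 1 6
(Leaf [::1;3;2;6;5;4;7])
(Leaf [::2;3;1;6;5;4;7])))
(Offer 0 4 4 7
(Offer 1 7 3 7
(Leaf [::4;5;6;2;3;1;7])
(Leaf [::4;5;6;2;1;3;7]))
(Offer 0 1 0 3
(Leaf [::1;3;2;6;5;4;7])
(Leaf [::3;1;2;6;5;4;7])))))
(Offer 1 4 3 4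
(Offer 3 5 4 5
(Offer 0 4 4 7
(Offer 3 7 6 7
(Leaf [::4;1;5;6;2;3;7])
(Leaf [::4;1;5;3;2;6;7]))
(Offer 0 3 0 6
(Leaf [::3;2;6;5;1;4;7])
(Leaf [::6;2;3;5;1;4;7])))
(Offer 0 3 3 7
(Offer 1 7 4 7
(Leaf [::3;2;6;5;4;1;7])
(Leaf [::3;2;6;5;1;4;7]))
(Offer 0 1 0 4
(Leaf [::1;4;5;6;2;3;7])
(Leaf [::4;1;5;6;2;3;7]))))
(Offer 0 4 4 7
(Offer 1 2 1 6
(Offer 1 7 6 7
(Leaf [::4;3;2;6;5;1;7])
(Leaf [::4;3;2;1;5;6;7]))
(Offer 1 7 5 7
(Leaf [::4;3;2;6;5;1;7])
(Leaf [::4;3;2;6;1;5;7])))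
(Offer 0 5 0 6
(Offer 0 1 1 6
(Leaf [::1;5;6;2;3;4;7])
(Leaf [::5;1;6;2;3;4;7]))
(Offer 0 1 1 2
(Leaf [::1;5;6;2;3;4;7])
(Leaf [::6;5;1;2;3;4;7]))))))
(Offer 1 4 1 5
(Offer 1 3 3 5
(Offer 0 3 3 7
(Offer 2 5 2 7
(Offer 5 7 6 7
(Leaf [::3;1;4;2;6;5;7])
(Leaf [::3;1;4;2;5;6;7]))
(Offer 4 5 5 7
(Leaf [::3;1;4;5;6;2;7])
(Leaf [::3;1;4;2;6;5;7])))
(Offer 0 2 0 6
(Offer 0 5 4 5
(Leaf [::5;6;2;4;1;3;7])
(Leaf [::2;6;5;4;1;3;7]))
(Offer 0 5 2 5
(Leaf [::5;6;2;4;1;3;7])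
(Leaf [::6;5;2;4;1;3;7]))))
(Offer 0 2 1 2
(Offer 1 7 3 7
(Offer 0 3 3 4
(Leaf [::3;5;6;2;4;1;7])
(Leaf [::2;6;5;3;4;1;7]))
(Offer 0 1 1 6
(Leaf [::1;4;2;6;5;3;7])
(Leaf [::2;4;1;6;5;3;7])))
(Offer 0 3 3 7
(Offer 1 7 4 7
(Leaf [::3;5;6;2;4;1;7])
(Leaf [::3;5;6;2;1;4;7]))
(Offer 0 1 0 4
(Leaf [::1;4;2;6;5;3;7])
(Leaf [::4;1;2;6;5;3;7])))))
(Offer 1 3 3 4
(Offer 3 5 4 5
(Offer 0 4 4 7
(Offer 1 7 3 7
(Leaf [::4;2;6;5;3;1;7])
(Leaf [::4;2;6;5;1;3;7]))
(Offer 0 1 0 3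
(Leaf [::1;3;5;6;2;4;7])
(Leaf [::3;1;5;6;2;4;7])))
(Offer 0 3 3 7
(Offer 4 7 6 7
(Leaf [::3;1;5;6;2;4;7])
(Leaf [::3;1;5;4;2;6;7]))
(Offer 0 4 0 6
(Leaf [::4;2;6;5;1;3;7])
(Leaf [::6;2;4;5;1;3;7]))))
(Offer 0 3 3 7
(Offer 1 2 1 6
(Offer 1 7 6 7
(Leaf [::3;4;2;6;5;1;7])
(Leaf [::3;4;2;1;5;6;7]))
(Offer 1 7 5 7
(Leaf [::3;4;2;6;5;1;7])
(Leaf [::3;4;2;6;1;5;7])))
(Offer 0 5 0 6
(Offer 0 1 1 6
(Leaf [::1;5;6;2;4;3;7])
(Leaf [::5;1;6;2;4;3;7]))
(Offer 0 1 1 2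
(Leaf [::1;5;6;2;4;3;7])
(Leaf [::6;5;1;2;4;3;7]))))))))
(Offer 3 4 4 6
(Offer 1 6 5 6
(Offer 1 2 1 5
(Offer 2 5 4 5
(Offer 0 5 5 7
(Offer 1 4 1 7
(Offer 4 7 6 7
(Leaf [::5;2;1;6;3;4;7])
(Leaf [::5;2;1;4;3;6;7]))
(Offer 2 4 4 7
(Leaf [::5;2;4;3;6;1;7])
(Leaf [::5;2;1;6;3;4;7])))
(Offer 0 1 0 6
(Offer 0 4 2 4
(Leaf [::4;3;6;1;2;5;7])
(Leaf [::1;6;3;4;2;5;7]))
(Offer 0 4 1 4
(Leaf [::4;3;6;1;2;5;7])
(Leaf [::6;3;4;1;2;5;7]))))
(Offer 0 5 5 7
(Offer 2 3 2 4
(Offer 2 7 6 7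
(Leaf [::5;4;3;6;1;2;7])
(Leaf [::5;4;3;2;1;6;7]))
(Offer 2 7 3 7
(Leaf [::5;4;3;6;1;2;7])
(Leaf [::5;4;2;1;6;3;7])))
(Offer 0 3 0 6
(Offer 0 2 2 4
(Leaf [::2;1;6;3;4;5;7])
(Leaf [::3;6;1;2;4;5;7]))
(Offer 0 2 2 3
(Leaf [::2;1;6;3;4;5;7])
(Leaf [::6;1;2;3;4;5;7])))))
(Offer 2 4 2 5
(Offer 0 2 2 7
(Offer 3 5 3 7
(Offer 5 7 6 7
(Leaf [::2;4;3;6;1;5;7])
(Leaf [::2;4;3;5;1;6;7]))
(Offer 4 5 5 7
(Leaf [::2;4;5;1;6;3;7])
(Leaf [::2;4;3;6;1;5;7])))
(Offer 0 3 0 6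
(Offer 0 5 4 5
(Leaf [::5;1;6;3;4;2;7])
(Leaf [::3;6;1;5;4;2;7]))
(Offer 0 5 3 5
(Leaf [::5;1;6;3;4;2;7])
(Leaf [::6;1;5;3;4;2;7]))))
(Offer 0 2 2 7
(Offer 1 4 1 7
(Offer 4 7 6 7
(Leaf [::2;5;1;6;3;4;7])
(Leaf [::2;5;1;4;3;6;7]))
(Offer 4 5 4 7
(Leaf [::2;5;4;3;6;1;7])
(Leaf [::2;5;1;6;3;4;7])))
(Offer 0 1 0 6
(Offer 0 4 4 5
(Leaf [::4;3;6;1;5;2;7])
(Leaf [::1;6;3;4;5;2;7]))
(Offer 0 4 1 4
(Leaf [::4;3;6;1;5;2;7])
(Leaf [::6;3;4;1;5;2;7]))))))
(Offer 1 4 1 5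
(Offer 1 2 2 5
(Offer 0 2 0 5
(Offer 3 5 3 7
(Offer 5 7 6 7
(Leaf [::2;1;4;3;6;5;7])
(Leaf [::2;1;4;3;5;6;7]))
(Offer 4 5 5 7
(Leaf [::2;1;4;5;6;3;7])
(Leaf [::2;1;4;3;6;5;7])))
(Offer 1 7 2 3
(Offer 2 4 2 7
(Leaf [::5;6;3;4;2;1;7])
(Leaf [::5;6;3;4;1;2;7]))
(Offer 2 7 4 7
(Leaf [::5;6;3;4;1;2;7])
(Leaf [::5;6;3;2;1;4;7]))))
(Offer 0 1 1 7
(Offer 2 3 2 4
(Offer 2 7 6 7
(Leaf [::1;4;3;6;5;2;7])
(Leaf [::1;4;3;2;5;6;7]))
(Offer 2 7 3 7
(Leaf [::1;4;3;6;5;2;7])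
(Leaf [::1;4;2;5;6;3;7])))
(Offer 0 3 0 6
(Offer 0 2 2 4
(Leaf [::2;5;6;3;4;1;7])
(Leaf [::3;6;5;2;4;1;7]))
(Offer 0 2 2 3
(Leaf [::2;5;6;3;4;1;7])
(Leaf [::6;5;2;3;4;1;7])))))
(Offer 1 2 2 4
(Offer 0 4 4 7
(Offer 1 7 2 3
(Offer 2 5 2 7
(Leaf [::4;3;6;5;2;1;7])
(Leaf [::4;3;6;5;1;2;7]))
(Offer 2 7 6 7
(Leaf [::4;3;6;5;1;2;7])
(Leaf [::4;3;2;1;5;6;7])))
(Offer 0 1 0 6
(Offer 0 2 2 5
(Leaf [::2;1;5;6;3;4;7])
(Leaf [::1;2;5;6;3;4;7]))
(Offer 0 2 2 3
(Leaf [::2;1;5;6;3;4;7])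
(Leaf [::6;5;1;2;3;4;7]))))
(Offer 0 1 1 7
(Offer 2 3 2 5
(Offer 2 7 4 7
(Leaf [::1;5;6;3;4;2;7])
(Leaf [::1;5;6;3;2;4;7]))
(Offer 2 7 6 7
(Leaf [::1;5;6;3;4;2;7])
(Leaf [::1;5;2;4;3;6;7])))
(Offer 0 4 0 6
(Offer 0 2 2 3
(Leaf [::2;4;3;6;5;1;7])
(Leaf [::4;2;3;6;5;1;7]))
(Offer 0 2 2 5
(Leaf [::2;4;3;6;5;1;7])
(Leaf [::6;3;4;2;5;1;7])))))))
(Offer 2 3 2 4
(Offer 1 4 4 5
(Offer 1 5 2 5
(Offer 0 2 2 7
(Offer 3 5 4 7
(Offer 5 7 6 7
(Leaf [::2;3;6;4;1;5;7])
(Leaf [::2;3;5;1;4;6;7]))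
(Offer 5 6 5 7
(Leaf [::2;3;6;5;1;4;7])
(Leaf [::2;3;6;4;1;5;7])))
(Offer 0 4 0 6
(Offer 0 5 5 6
(Leaf [::5;1;4;6;3;2;7])
(Leaf [::4;1;5;6;3;2;7]))
(Offer 0 5 3 5
(Leaf [::5;1;4;6;3;2;7])
(Leaf [::6;4;1;5;3;2;7]))))
(Offer 0 1 0 5
(Offer 2 7 3 7
(Offer 3 5 5 7
(Leaf [::1;4;6;3;5;2;7])
(Leaf [::1;4;6;3;2;5;7]))
(Offer 5 6 5 7
(Leaf [::1;4;6;5;2;3;7])
(Leaf [::1;4;6;3;2;5;7])))
(Offer 1 2 1 3
(Offer 1 7 3 7
(Leaf [::5;2;3;6;4;1;7])
(Leaf [::5;2;1;4;6;3;7]))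
(Offer 1 7 6 7
(Leaf [::5;2;3;6;4;1;7])
(Leaf [::5;2;3;1;4;6;7])))))
(Offer 1 2 1 5
(Offer 0 1 0 5
(Offer 2 5 3 5
(Offer 3 7 5 7
(Leaf [::1;2;5;4;6;3;7])
(Leaf [::1;2;3;6;4;5;7]))
(Offer 5 7 6 7
(Leaf [::1;2;3;6;4;5;7])
(Leaf [::1;2;3;5;4;6;7])))
(Offer 1 3 1 6
(Offer 1 7 2 7
(Leaf [::5;4;6;3;2;1;7])
(Leaf [::5;4;6;3;1;2;7]))
(Offer 1 7 3 7
(Leaf [::5;4;6;3;2;1;7])
(Leaf [::5;4;6;1;2;3;7]))))
(Offer 0 2 2 7
(Offer 1 3 1 6
(Offer 1 7 6 7
(Leaf [::2;3;6;4;5;1;7])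
(Leaf [::2;3;1;5;4;6;7]))
(Offer 1 7 4 7
(Leaf [::2;3;6;4;5;1;7])
(Leaf [::2;3;6;1;5;4;7])))
(Offer 0 4 0 6
(Offer 0 1 1 6
(Leaf [::1;5;4;6;3;2;7])
(Leaf [::4;5;1;6;3;2;7]))
(Offer 0 1 1 3
(Leaf [::1;5;4;6;3;2;7])
(Leaf [::6;4;5;1;3;2;7]))))))
(Offer 1 3 3 5
(Offer 1 5 2 5
(Offer 0 2 2 7
(Offer 3 7 4 5
(Offer 5 6 5 7
(Leaf [::2;4;6;5;1;3;7])
(Leaf [::2;4;6;3;1;5;7]))
(Offer 5 7 6 7
(Leaf [::2;4;6;3;1;5;7])
(Leaf [::2;4;5;1;3;6;7])))
(Offer 0 3 0 6
(Offer 0 5 5 6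
(Leaf [::5;1;3;6;4;2;7])
(Leaf [::3;1;5;6;4;2;7]))
(Offer 0 5 4 5
(Leaf [::5;1;3;6;4;2;7])
(Leaf [::6;3;1;5;4;2;7]))))
(Offer 0 1 0 5
(Offer 2 7 4 7
(Offer 4 5 5 7
(Leaf [::1;3;6;4;5;2;7])
(Leaf [::1;3;6;4;2;5;7]))
(Offer 5 6 5 7
(Leaf [::1;3;6;5;2;4;7])
(Leaf [::1;3;6;4;2;5;7])))
(Offer 1 2 1 4
(Offer 1 7 4 7
(Leaf [::5;2;4;6;3;1;7])
(Leaf [::5;2;1;3;6;4;7]))
(Offer 1 7 6 7
(Leaf [::5;2;4;6;3;1;7])
(Leaf [::5;2;4;1;3;6;7])))))
(Offer 1 2 1 5
(Offer 0 1 0 5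
(Offer 2 5 3 7
(Offer 4 7 5 7
(Leaf [::1;2;5;3;6;4;7])
(Leaf [::1;2;4;6;3;5;7]))
(Offer 5 6 5 7
(Leaf [::1;2;4;6;5;3;7])
(Leaf [::1;2;4;6;3;5;7])))
(Offer 1 4 1 6
(Offer 1 7 2 7
(Leaf [::5;3;6;4;2;1;7])
(Leaf [::5;3;6;4;1;2;7]))
(Offer 1 7 4 7
(Leaf [::5;3;6;4;2;1;7])
(Leaf [::5;3;6;1;2;4;7]))))
(Offer 0 2 2 7
(Offer 1 4 1 6
(Offer 1 7 6 7
(Leaf [::2;4;6;3;5;1;7])
(Leaf [::2;4;1;5;3;6;7]))
(Offer 1 7 3 7
(Leaf [::2;4;6;3;5;1;7])
(Leaf [::2;4;6;1;5;3;7])))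
(Offer 0 3 0 6
(Offer 0 1 1 6
(Leaf [::1;5;3;6;4;2;7])
(Leaf [::3;5;1;6;4;2;7]))
(Offer 0 1 1 4
(Leaf [::1;5;3;6;4;2;7])
(Leaf [::6;3;5;1;4;2;7]))))))))).

Lemma K8_strategy_wins : strategy_wins 6 8 [::] [::] K8_strategy.
Proof. by vm_compute. Qed.

Theorem lemma3p2 (n : nat) (x y : 'I_n) :
  8 <= n -> x != y -> waiter_wins x y n set0 set0.
Proof.
move=> n_ge8 xy; have [s pos size_s] := initial_greedy_position xy.
suff : waiter_wins x y (n - 8 + 8) set0 set0 by rewrite subnK.
apply: (greedy_wins _ (greedy_position_endgame K8_strategy_wins) pos) => //.
by rewrite size_s; lia.
Qed.
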